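(* For $(n,m) \in \mathbb{Z}^2$ let $q_{(n,m)}(x) = x^4 + n x^3 + m x^2 + n x + 1$, and let $Q = \{(n,m) \in \mathbb{Z}^2 : q_{(n,m)} \text{ has no real root}\}$. Then there exists a finite set $\tilde{Q} \subseteq \mathbb{Z}^2$ such that for every $(n,m) \in Q \setminus \tilde{Q}$ one has $n^2 - 4m + 8 \le 0$. *)

From Stdlib Require Import Reals ZArith List.
Open Scope R_scope.

Definition q (n m : Z) (x : R) : R :=
  x ^ 4 + IZR n * x ^ 3 + IZR m * x ^ 2 + IZR n * x + 1.

Definition in_Q (n m : Z) : Prop := forall x : R, q n m x <> 0.

(* q is palindromic: for x <> 0, q(x) / x^2 = p(y) with y = x + 1/x and
   p(y) = y^2 + n y + (m - 2), and y = x + 1/x for some real x exactly when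
   y^2 >= 4.  So if q has no real root, every real root of p lies in (-2, 2).
   When the discriminant n^2 - 4m + 8 of p is positive, p has two real roots
   y1, y2 in (-2, 2), and Vieta gives |n| = |y1 + y2| < 4 and
   |m - 2| = |y1 y2| < 4: only finitely many (n, m) remain. *)
From Stdlib Require Import Reals ZArith List.
From Stdlib Require Import Lra Lia Psatz.

Lemma q_reduced_factor (n m : Z) (x y : R) :
  q n m x = (x * x - y * x + 1) * (x * x + (IZR n + y) * x + 1)
            + (y * y + IZR n * y + IZR m - 2) * (x * x).
Proof. unfold q; ring. Qed.

Lemma exists_x_plus_inv_eq (y : R) : 4 <= y * y -> exists x, x * x - y * x + 1 = 0.
Proof.
  intros Hy.
  assert (Ht : sqrt (y * y - 4) * sqrt (y * y - 4) = y * y - 4)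
    by (apply sqrt_sqrt; lra).
  exists ((y + sqrt (y * y - 4)) / 2); nra.
Qed.

Lemma in_Q_reduced_root_lt2 (n m : Z) (y : R) :
  in_Q n m -> y * y + IZR n * y + IZR m - 2 = 0 -> y * y < 4.
Proof.
  intros HQ Hy.
  destruct (Rlt_or_le (y * y) 4) as [Hlt | Hge]; [exact Hlt |].
  destruct (exists_x_plus_inv_eq y Hge) as [x Hx].
  exfalso; apply (HQ x).
  rewrite (q_reduced_factor n m x y), Hx, Hy; ring.
Qed.

Lemma quadratic_coeffs_bounded (b c : R) :
  0 < b * b - 4 * c ->
  (forall y, y * y + b * y + c = 0 -> y * y < 4) ->
  -4 < b < 4 /\ -4 < c < 4.
Proof.
  intros HD Hroots.
  set (s := sqrt (b * b - 4 * c)).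
  assert (Hs : s * s = b * b - 4 * c) by (apply sqrt_sqrt; lra).
  set (y1 := (- b + s) / 2); set (y2 := (- b - s) / 2).
  assert (H1 : y1 * y1 < 4) by (apply Hroots; unfold y1; nra).
  assert (H2 : y2 * y2 < 4) by (apply Hroots; unfold y2; nra).
  assert (Hb : b = - (y1 + y2)) by (unfold y1, y2; field).
  assert (Hc : c = y1 * y2) by (unfold y1, y2; nra).
  assert (Hy1 : -2 < y1 < 2) by nra.
  assert (Hy2 : -2 < y2 < 2) by nra.
  rewrite Hb, Hc; split; nra.
Qed.

Lemma in_Q_pos_discr_bounds (n m : Z) :
  in_Q n m -> (n ^ 2 - 4 * m + 8 > 0)%Z ->
  (-3 <= n <= 3 /\ -1 <= m <= 5)%Z.
Proof.
  intros HQ HD.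
  assert (HDr : 0 < IZR n * IZR n - 4 * (IZR m - 2)).
  { replace (IZR n * IZR n - 4 * (IZR m - 2)) with (IZR (n * n - 4 * m + 8))
      by (rewrite plus_IZR, minus_IZR, !mult_IZR; ring).
    apply IZR_lt; lia. }
  assert (Hroots : forall y, y * y + IZR n * y + (IZR m - 2) = 0 -> y * y < 4)
    by (intros y Hy; apply (in_Q_reduced_root_lt2 n m y HQ); lra).
  destruct (quadratic_coeffs_bounded _ _ HDr Hroots) as [[Hn1 Hn2] [Hm1 Hm2]].
  apply lt_IZR in Hn1, Hn2.
  assert (Hm1' : (-2 < m)%Z) by (apply lt_IZR; lra).
  assert (Hm2' : (m < 6)%Z) by (apply lt_IZR; lra).
  lia.
Qed.

Definition Zinterval (a b : Z) : list Z :=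
  map (fun k => (a + Z.of_nat k)%Z) (seq 0 (Z.to_nat (b - a + 1))).

Lemma in_Zinterval (a b z : Z) : (a <= z <= b)%Z -> In z (Zinterval a b).
Proof.
  intros Hz; apply in_map_iff.
  exists (Z.to_nat (z - a)); split; [lia | apply in_seq; lia].
Qed.

Theorem lemmaA1 :
  exists Qt : list (Z * Z),
    forall n m : Z, in_Q n m -> ~ In (n, m) Qt ->
      (n ^ 2 - 4 * m + 8 <= 0)%Z.
Proof.
  exists (list_prod (Zinterval (-3) 3) (Zinterval (-1) 5)).
  intros n m HQ Hout.
  destruct (Z_le_gt_dec (n ^ 2 - 4 * m + 8) 0) as [Hle | Hgt]; [exact Hle |].
  destruct (in_Q_pos_discr_bounds n m HQ Hgt) as [Hn Hm].
  exfalso; apply Hout, in_prod; apply in_Zinterval; assumption.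
Qed.
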